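(* Let $n\ge 4$ and $k\ge 3$ be integers. Let $C_n=\{0,1,\dots,n-1\}$ be the $n$-element chain with the usual order, and let $C_2=\{0,1\}$. Let $K=C_n\times\dots\times C_n\times C_2$ be the direct product of $k$ copies of $C_n$ followed by one copy of $C_2$. Define $$e=(0,\dots,0,1,0),\qquad f=(n-2,\dots,n-2,n-1,0)\in K,$$ where the entry $1$ of $e$ and the entry $n-1$ of $f$ are in coordinate $k$. Let $L(n,k)=K\setminus[e,f]$ with the order inherited from $K$. Then $L(n,k)$ is an upper semimodular lattice with $2n^k-(n-1)^k$ elements and breadth $k$, and $L(n,k)$ fails to satisfy the $c_1$-median property.
   Context: $[e,f]=\{x\in K: e\le x\le f\}$, with the componentwise order on $K$. A lattice is upper semimodular if for all $x,y$, $x\wedge y\prec x$ implies $y\prec x\vee y$, where $\prec$ is the covering relation. The breadth of a lattice $L$ is the least positive integer $n$ such that every join of $m\ge n$ elements equals the join of some $n$ of those elements. For a lattice $L$ of finite length, $d(x,y)$ is the length of a shortest path between $x$ and $y$ in the undirected covering graph of $L$. For $\xi=(x_1,\dots,x_k)\in L^k$, an element $y\in L$ is a median of $\xi$ if $\sum_{i} d(y,x_i)$ is minimum over $L$. The lattice $L$ satisfies the $c_1$-median property if every median $y$ of every profile $\xi$ satisfies $y\le x_1\vee\dots\vee x_k$. *)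

From mathcomp Require Import all_boot.
Set Implicit Arguments. Unset Strict Implicit. Unset Printing Implicit Defensive.

Section Generic.
Variables (T : finType) (le : rel T).

Definition partial_order :=
  [/\ forall x, le x x,
      forall x y, le x y -> le y x -> x = y &
      forall x y z, le x y -> le y z -> le x z].

Definition is_lub (x y j : T) : bool :=
  [&& le x j, le y j & [forall z, le x z ==> le y z ==> le j z]].
Definition is_glb (x y m : T) : bool :=
  [&& le m x, le m y & [forall z, le z x ==> le z y ==> le z m]].

Definition is_lub_set (S : {set T}) (j : T) : bool :=
  [forall y in S, le y j] && [forall z, [forall y in S, le y z] ==> le j z].

Definition is_lattice :=
  partial_order /\ forall x y, (exists j, is_lub x y j) /\ (exists m, is_glb x y m).

Definition covers (x y : T) : bool :=
  [&& le x y, x != y & [forall z, ~~ [&& le x z, le z y, z != x & z != y]]].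

Definition upper_semimodular :=
  forall x y m j, is_glb x y m -> is_lub x y j -> covers m x -> covers y j.

Definition breadth_prop (b : nat) :=
  forall S : {set T}, b <= #|S| ->
    exists2 S' : {set T}, S' \subset S &
      #|S'| = b /\ forall j, is_lub_set S j = is_lub_set S' j.

Definition has_breadth (b : nat) :=
  [/\ 0 < b, breadth_prop b & forall b', 0 < b' < b -> ~ breadth_prop b'].

Definition adj : rel T := fun x y => covers x y || covers y x.

Definition walk_len (m : nat) (x y : T) : bool :=
  [exists p : m.-tuple T, path adj x p && (last x p == y)].

(* graph distance: least length of a walk (a shortest walk is a path, of
   length < #|T|); default #|T| if unreachable (never in a finite lattice) *)
Definition dist (x y : T) : nat :=
  \big[minn/#|T|]_(m < #|T| | walk_len m x y) m.

Definition total_dist (xi : seq T) (y : T) : nat := \sum_(x <- xi) dist y x.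

Definition is_median (xi : seq T) (y : T) :=
  forall z, total_dist xi y <= total_dist xi z.

Definition c1_median :=
  forall (xi : seq T) (y : T), xi != [::] -> is_median xi y ->
    forall j, is_lub_set [set x in xi] j -> le y j.

End Generic.

(* K = C_n^k x C_2 ; coordinates 0..k-1 are the C_n copies (coordinate k of
   the paper is index k-1), the bool is the C_2 coordinate (false = 0). *)
Definition K (n k : nat) := ({ffun 'I_k -> 'I_n} * bool)%type.

Definition leK (n k : nat) (x y : K n k) : bool :=
  [forall i, x.1 i <= y.1 i] && (x.2 ==> y.2).

Definition e_coord (n k : nat) (i : 'I_k) : nat := if val i == k.-1 then 1 else 0.
Definition f_coord (n k : nat) (i : 'I_k) : nat := if val i == k.-1 then n - 1 else n - 2.

Definition in_ef (n k : nat) (x : K n k) : bool :=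
  [forall i, (e_coord n i <= x.1 i) && (x.1 i <= f_coord n i)] && ~~ x.2.

Definition L (n k : nat) := {x : K n k | ~~ in_ef x}.

Definition leL (n k : nat) : rel (L n k) := fun x y => leK (val x) (val y).

(* Write x in K as (x_1, ..., x_k; b). The rank x_1 + ... + x_k + b of K restricts
   to L, and a < b is a covering pair of L exactly when the rank goes up by one:
   between a < b one can always make a rank step inside L, by switching b, raising a
   coordinate other than k, or lowering coordinate k. Joins in L are joins in K, and
   the meet m of x and y is the meet in K as soon as m is covered by x, so upper
   semimodularity follows from the modularity of the rank of K.

   Any join in L is the join of k of the elements: take for each coordinate an
   element maximising it; the one maximising coordinate k can be traded for an
   element with b = 1, unless (lying outside [e, f]) it also attains n - 1 in some
   other coordinate, which then needs no element of its own. Any k + 1 atoms show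
   that no smaller number works.

   The L1 distance of K bounds the distance of the covering graph from below. Inside
   the layer b = 1, a full copy of C_n^k, y = (0, ..., 0, n - 1; 1) is at distance n
   from each of (n - 1, 0, ..., 0, n - 1; 0), (0, n - 1, 0, ..., 0, n - 1; 0) and 0,
   and an L1 count shows that no element does better, so y is a median; but y is not
   below (n - 1, ..., n - 1; 0), an upper bound of the profile. *)

From mathcomp Require Import all_boot zify.
Set Implicit Arguments. Unset Strict Implicit. Unset Printing Implicit Defensive.

Lemma geq_bigminn_cond (I : eqType) (r : seq I) (P : pred I) (F : I -> nat) c i :
  i \in r -> P i -> \big[minn/c]_(j <- r | P j) F j <= F i.
Proof.
elim: r => // a r IH; rewrite in_cons big_cons => /predU1P[<- -> | ir Pi].
  exact: geq_minl.
by case: ifP => _; [apply: leq_trans (geq_minr _ _) _ |]; exact: IH.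
Qed.

Lemma leq_sum_eq (I : finType) (f g : I -> nat) :
  (forall i, f i <= g i) -> \sum_i g i <= \sum_i f i -> f =1 g.
Proof.
move=> fg sum_gf i; apply/eqP; rewrite eqn_leq fg /= leqNgt; apply/negP => lt_fg.
have : \sum_j f j < \sum_j g j.
  rewrite (bigD1 i) // [X in _ < X](bigD1 i) //= -addSn leq_add //.
  by apply: leq_sum => j _; exact: fg.
by rewrite ltnNge sum_gf.
Qed.

Lemma leq_sum_uniq (I : finType) (s : seq I) (F : I -> nat) :
  uniq s -> \sum_(i <- s) F i <= \sum_i F i.
Proof.
move=> us; apply: (@uniq_sub_le_big nat addn leq leqnn (fun m p => leq_addr p m)) => //.
exact: index_enum_uniq.
Qed.

Lemma subset_card_between (T : finType) (W S : {set T}) c :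
  W \subset S -> #|W| <= c -> c <= #|S| ->
  exists2 S' : {set T}, W \subset S' & S' \subset S /\ #|S'| = c.
Proof.
move=> WS Wc cS.
have /card_geqP[s [us size_s sSW]] : c - #|W| <= #|S :\: W|.
  by rewrite cardsD (setIidPr WS); lia.
exists (W :|: [set x in s]); first exact: subsetUl.
split.
  rewrite subUset WS; apply/subsetP => x; rewrite inE => /sSW.
  by rewrite inE => /andP[].
have /eqP-> : #|W :|: [set x in s]| == #|W| + #|[set x in s]|.
  rewrite (leq_card_setU _ _).2 disjoints_subset; apply/subsetP => x xW.
  by rewrite !inE; apply/negP => /sSW; rewrite inE xW.
by rewrite cardsE (card_uniqP us); lia.
Qed.

Lemma bernoulli m n : m * n + 1 <= n.+1 ^ m.
Proof.
elim: m => [|m IH] //; rewrite expnS.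
by apply: leq_trans (_ : n.+1 * (m * n + 1) <= _); [nia | rewrite leq_mul2l IH orbT].
Qed.

Section CoveringGraph.
Variables (T : finType) (le : rel T).

Lemma walk_len_refl x : walk_len le 0 x x.
Proof. by apply/existsP; exists [tuple]; rewrite /= eqxx. Qed.

Lemma walk_len_adj x y : adj le x y -> walk_len le 1 x y.
Proof. by move=> xy; apply/existsP; exists [tuple y]; rewrite /= xy eqxx. Qed.

Lemma walk_len_cat m p x y z :
  walk_len le m x y -> walk_len le p y z -> walk_len le (m + p) x z.
Proof.
move=> /existsP[s /andP[s_path /eqP s_last]] /existsP[t /andP[t_path /eqP t_last]].
apply/existsP; exists [tuple of s ++ t].
by rewrite /= cat_path s_path last_cat s_last t_path t_last eqxx.
Qed.

Lemma walk_len_chain (g : nat -> T) m :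
  (forall j, j < m -> adj le (g j) (g j.+1)) -> walk_len le m (g 0) (g m).
Proof.
elim: m => [|m IH] g_adj; first exact: walk_len_refl.
have := walk_len_cat (IH _) (walk_len_adj (g_adj m _)); rewrite addn1; apply => //.
by move=> j lt_jm; exact: g_adj (ltnW _).
Qed.

Lemma leq_walk_len (D : T -> T -> nat) :
  (forall x, D x x = 0) -> (forall x y z, D x z <= D x y + D y z) ->
  (forall x y, adj le x y -> D x y <= 1) ->
  forall m x y, walk_len le m x y -> D x y <= m.
Proof.
move=> D0 D_tri D_adj m x y /existsP[p /andP[p_path /eqP <-]].
suff : D x (last x p) <= size p by rewrite size_tuple.
elim: (tval p) x p_path => [|a s IH] x /=; first by rewrite D0.
case/andP=> xa s_path; apply: leq_trans (D_tri x a _) _.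
by rewrite -add1n leq_add ?D_adj ?IH.
Qed.

Lemma dist_leq m x y : walk_len le m x y -> m < #|T| -> dist le x y <= m.
Proof.
move=> xy lt_mT.
exact: (geq_bigminn_cond (fun i : 'I_#|T| => val i) _ (mem_index_enum (Ordinal lt_mT)) xy).
Qed.

Lemma leq_dist (D : nat) x y : (forall m, walk_len le m x y -> D <= m) ->
  D <= #|T| -> D <= dist le x y.
Proof.
move=> D_walk D_T; rewrite /dist; elim/big_ind: _ => // [a b Da Db|i /D_walk //].
by rewrite leq_min Da Db.
Qed.

Lemma total_dist3 a b c y :
  total_dist le [:: a; b; c] y = dist le y a + dist le y b + dist le y c.
Proof. by rewrite /total_dist !big_cons big_nil addn0 addnA. Qed.

End CoveringGraph.

Section Joins.
Variables (T : finType) (le : rel T).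
Hypothesis le_po : partial_order le.

Lemma is_lub_unique x y j1 j2 : is_lub le x y j1 -> is_lub le x y j2 -> j1 = j2.
Proof.
case: le_po => _ anti _ /and3P[xj1 yj1 /forallP j1_least] /and3P[xj2 yj2 /forallP j2_least].
by apply: anti; [exact: implyP (implyP (j1_least j2) xj2) yj2 |
                 exact: implyP (implyP (j2_least j1) xj1) yj1].
Qed.

Lemma is_lub_set_exists (bot : T) : (forall x, le bot x) ->
  (forall x y, exists j, is_lub le x y j) -> forall S : {set T}, exists j, is_lub_set le S j.
Proof.
case: le_po => _ _ le_trans bot_le join S.
elim: {S}#|S| {-2}S (leqnn #|S|) => [|c IH] S card_S.
  move: card_S; rewrite leqn0 cards_eq0 => /eqP->; exists bot.
  by apply/andP; split; apply/forallP => z; rewrite ?in_set0 ?bot_le ?implybT.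
have [-> | [x xS]] := set_0Vmem S; first by apply: IH; rewrite cards0.
have [|j0 /andP[/forallP j0_ub /forallP j0_least]] := IH (S :\ x).
  by move: card_S; rewrite (cardsD1 x S) xS.
have [j /and3P[xj j0j /forallP j_least]] := join x j0.
exists j; apply/andP; split; apply/forallP => z.
  apply/implyP => zS; have [-> // | zx] := eqVneq z x.
  by apply: le_trans j0j; apply: (implyP (j0_ub z)); rewrite in_setD1 zx zS.
apply/implyP => /forallP z_ub; apply: (implyP (implyP (j_least z) _)).
  exact: implyP (z_ub x) xS.
apply: (implyP (j0_least z)); apply/forallP => y; apply/implyP.
by rewrite in_setD1 => /andP[_ yS]; exact: implyP (z_ub y) yS.
Qed.

End Joins.

Lemma eq_is_lub_set (T : finType) (le : rel T) (S S' : {set T}) : S' \subset S ->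
  (forall z, [forall y in S', le y z] -> [forall y in S, le y z]) ->
  is_lub_set le S =1 is_lub_set le S'.
Proof.
move=> S'S ub_S'S.
have ub_eq z : [forall y in S, le y z] = [forall y in S', le y z].
  apply/idP/idP => [/forallP zS | /ub_S'S //]; apply/forallP => y.
  by apply/implyP => /(subsetP S'S) yS; exact: implyP (zS y) yS.
by move=> j; rewrite /is_lub_set ub_eq; congr (_ && _); apply: eq_forallb => z; rewrite ub_eq.
Qed.

(* The section studies L n.+1 k.+1: the chains are 'I_n.+1, with top n, and
   coordinate k of the paper is [lst]. *)
Section Lnk.
Variables n k : nat.
Local Notation KT := (K n.+1 k.+1).
Local Notation LT := (L n.+1 k.+1).
Local Notation FF := {ffun 'I_k.+1 -> 'I_n.+1}.
Local Notation le := (@leL n.+1 k.+1).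
Implicit Types (x y z : KT) (f g : FF).

(* For n = 0 the coordinates n - 2 of f are truncated-subtraction junk. *)
Hypothesis n_gt0 : 0 < n.

Definition lst : 'I_k.+1 := ord_max.

Lemma in_efP x :
  reflect [/\ x.2 = false, 0 < x.1 lst & forall i, i != lst -> x.1 i < n] (in_ef x).
Proof.
rewrite /in_ef /e_coord /f_coord /=.
have lstE (i : 'I_k.+1) : (i == k :> nat) = (i == lst) by rewrite -val_eqE.
apply: (iffP andP) => [[/forallP box /negbTE x2] | [x2 pos small]].
  split=> // [|i il]; first by have := box lst; rewrite eqxx => /andP[].
  by have := box i; rewrite lstE (negbTE il); lia.
split; last by rewrite x2.
apply/forallP => i; rewrite lstE; have [-> | il] := eqVneq i lst.
  by rewrite pos; have := ltn_ord (x.1 lst); lia.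
by have := small i il; lia.
Qed.

Lemma leKP x y : reflect ((forall i, x.1 i <= y.1 i) /\ (x.2 ==> y.2)) (leK x y).
Proof. by apply: (iffP andP) => -[le_xy le_b]; split => //; apply/forallP. Qed.

Lemma leK_refl x : leK x x.
Proof. by apply/leKP; split => //; rewrite implybb. Qed.

Lemma leK_trans y x z : leK x y -> leK y z -> leK x z.
Proof.
move=> /leKP[xy1 xy2] /leKP[yz1 yz2]; apply/leKP; split.
  by move=> i; exact: leq_trans (xy1 i) (yz1 i).
by move: xy2 yz2; case: x.2; case: y.2.
Qed.

Definition mkL x (x_L : ~~ in_ef x) : LT := exist (fun x => ~~ in_ef x) x x_L.

Lemma notin_ef_top f : ~~ in_ef (f, true).
Proof. by apply/in_efP => -[]. Qed.

Definition mkT f : LT := mkL (notin_ef_top f).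

Definition rk x : nat := \sum_i x.1 i + x.2.

Lemma leq_rk x y : leK x y -> rk x <= rk y.
Proof.
case/leKP => xy1 xy2; rewrite leq_add //; first by apply: leq_sum => i _.
by move: xy2; case: x.2; case: y.2.
Qed.

Lemma leK_rk_eq x y : leK x y -> rk y <= rk x -> x = y.
Proof.
case: x y => [f b] [g c] xy ry; case/leKP: (xy) => /= fg bc.
have b_eq_c : b = c.
  have /leq_rk : leK (f, false) (g, false) by apply/leKP.
  by move: ry bc; rewrite /rk /=; case: (b); case: (c) => //= ry _ sum_fg; exfalso; lia.
subst c; congr (_, _); apply/ffunP => i; apply: val_inj; apply: (leq_sum_eq fg).
by move: ry; rewrite /rk /= leq_add2r.
Qed.

Definition upd f i (v : 'I_n.+1) : FF := [ffun j => if j == i then v else f j].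

Lemma rk_upd f i v b : rk (upd f i v, b) + f i = rk (f, b) + v.
Proof.
rewrite /rk /= (bigD1 i) // [\sum_j f j](bigD1 i) //= ffunE eqxx.
under eq_bigr => j /negbTE ji do rewrite ffunE ji.
lia.
Qed.

Lemma leK_updl f g i (v : 'I_n.+1) b c :
  leK (f, b) (g, c) -> v <= g i -> leK (upd f i v, b) (g, c).
Proof.
case/leKP => fg bc vg; apply/leKP; split => // j /=.
by rewrite ffunE; case: eqP => [-> | _].
Qed.

Lemma leK_updr f g i (v : 'I_n.+1) b c :
  leK (f, b) (g, c) -> f i <= v -> leK (f, b) (upd g i v, c).
Proof.
case/leKP => fg bc fv; apply/leKP; split => // j /=.
by rewrite ffunE; case: eqP => [-> | _].
Qed.

Definition maxo (a b : 'I_n.+1) := if a <= b then b else a.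
Definition mino (a b : 'I_n.+1) := if a <= b then a else b.

Lemma maxoE a b : maxo a b = maxn a b :> nat.
Proof. by rewrite /maxo; case: leqP; lia. Qed.

Lemma minoE a b : mino a b = minn a b :> nat.
Proof. by rewrite /mino; case: leqP; lia. Qed.

Definition joinK x y : KT := ([ffun i => maxo (x.1 i) (y.1 i)], x.2 || y.2).
Definition meetK x y : KT := ([ffun i => mino (x.1 i) (y.1 i)], x.2 && y.2).

Lemma leK_joinKl x y : leK x (joinK x y).
Proof.
by apply/leKP; split => [i|] /=; rewrite ?ffunE ?maxoE ?leq_maxl //; apply/implyP => ->.
Qed.

Lemma leK_joinKr x y : leK y (joinK x y).
Proof.
apply/leKP; split => [i|] /=; first by rewrite ffunE maxoE leq_maxr.
by apply/implyP => ->; rewrite orbT.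
Qed.

Lemma joinK_least x y z : leK x z -> leK y z -> leK (joinK x y) z.
Proof.
move=> /leKP[xz1 xz2] /leKP[yz1 yz2]; apply/leKP; split => [i|] /=.
  by rewrite ffunE maxoE geq_max xz1 yz1.
by move: xz2 yz2; case: x.2; case: y.2.
Qed.

Lemma leK_meetKl x y : leK (meetK x y) x.
Proof.
by apply/leKP; split => [i|] /=; rewrite ?ffunE ?minoE ?geq_minl //; apply/implyP => /andP[].
Qed.

Lemma leK_meetKr x y : leK (meetK x y) y.
Proof.
by apply/leKP; split => [i|] /=; rewrite ?ffunE ?minoE ?geq_minr //; apply/implyP => /andP[].
Qed.

Lemma meetK_greatest x y z : leK z x -> leK z y -> leK z (meetK x y).
Proof.
move=> /leKP[zx1 zx2] /leKP[zy1 zy2]; apply/leKP; split => [i|] /=.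
  by rewrite ffunE minoE leq_min zx1 zy1.
by move: zx2 zy2; case: z.2; case: x.2; case: y.2.
Qed.

Lemma rk_joinK_meetK x y : rk (joinK x y) + rk (meetK x y) = rk x + rk y.
Proof.
rewrite /rk /= addnACA -big_split [X in _ = X]addnACA -big_split /=.
congr (_ + _); last by case: x.2; case: y.2.
by apply: eq_bigr => i _; rewrite !ffunE maxoE minoE; lia.
Qed.

Lemma joinK_notin_ef x y : ~~ in_ef x -> ~~ in_ef y -> ~~ in_ef (joinK x y).
Proof.
move=> x_L y_L; apply/in_efP => -[/= /norP[/negbTE x2 /negbTE y2]].
rewrite ffunE maxoE => pos small.
have small_x i : i != lst -> x.1 i < n.
  by move=> il; have := small i il; rewrite ffunE maxoE; lia.
have small_y i : i != lst -> y.1 i < n.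
  by move=> il; have := small i il; rewrite ffunE maxoE; lia.
have [x0 | x_pos] := posnP (x.1 lst).
  by move/in_efP: y_L; apply; split => //; lia.
by move/in_efP: x_L; apply.
Qed.

Lemma leL_partial_order : partial_order le.
Proof.
split=> [x | x y xy yx | x y z]; [exact: leK_refl | | exact: leK_trans].
by apply: val_inj; apply: leK_rk_eq xy (leq_rk yx).
Qed.

Definition joinL (x y : LT) : LT := mkL (joinK_notin_ef (valP x) (valP y)).

Lemma joinL_lub (x y : LT) : is_lub le x y (joinL x y).
Proof.
apply/and3P; split; [exact: leK_joinKl | exact: leK_joinKr |].
by apply/forallP => z; apply/implyP => xz; apply/implyP; exact: joinK_least.
Qed.

(* If the meet in K lies in [e, f], lowering its coordinate k to 0 gives the
   largest element of L below it. *)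
Definition meetKL x y : KT :=
  let m := meetK x y in if in_ef m then (upd m.1 lst ord0, m.2) else m.

Lemma meetKL_notin_ef x y : ~~ in_ef (meetKL x y).
Proof.
rewrite /meetKL; case: ifP => [_ | -> //].
by apply/in_efP => -[_]; rewrite ffunE eqxx.
Qed.

Definition meetL (x y : LT) : LT := mkL (meetKL_notin_ef (val x) (val y)).

Lemma meetL_glb (x y : LT) : is_glb le x y (meetL x y).
Proof.
have KL_le_meetK : leK (meetKL (val x) (val y)) (meetK (val x) (val y)).
  rewrite /meetKL; case: ifP => _; last exact: leK_refl.
  by apply: leK_updl (leK_refl _) _.
apply/and3P; split;
  [exact: leK_trans KL_le_meetK (leK_meetKl _ _) | exact: leK_trans KL_le_meetK (leK_meetKr _ _) |].
apply/forallP => z; apply/implyP => zx; apply/implyP => zy.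
have zm := meetK_greatest zx zy; rewrite /leL /= /meetKL.
case: ifP => [/in_efP[m2 m_pos m_small] | _ //].
case/leKP: zm => z_le_m z2; apply: leK_updr; first by apply/leKP.
have z2F : (val z).2 = false by move: z2; rewrite m2; case: (val z).2.
rewrite leqn0; apply: contraT => z_pos; case/negP: (valP z); apply/in_efP.
split=> // [|i il]; first by rewrite lt0n.
exact: leq_ltn_trans (z_le_m i) (m_small i il).
Qed.

Lemma leL_lattice : is_lattice le.
Proof.
split; first exact: leL_partial_order.
move=> x y; split; first by exists (joinL x y); exact: joinL_lub.
by exists (meetL x y); exact: meetL_glb.
Qed.

Lemma notin_ef_raise x i (v : 'I_n.+1) : ~~ in_ef x -> i != lst -> x.1 i <= v ->
  ~~ in_ef (upd x.1 i v, x.2).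
Proof.
move=> x_L il xv; apply: contra x_L => /in_efP[/= x2 pos small]; apply/in_efP.
split=> // [|j jl]; first by move: pos; rewrite ffunE eq_sym (negbTE il).
by have := small j jl; rewrite ffunE; case: eqP => [-> | _]; lia.
Qed.

Lemma notin_ef_lower_lst x (v : 'I_n.+1) : ~~ in_ef x -> v <= x.1 lst ->
  ~~ in_ef (upd x.1 lst v, x.2).
Proof.
move=> x_L vx; apply: contra x_L => /in_efP[/= x2 pos small]; apply/in_efP.
split=> // [|j jl]; first by move: pos; rewrite ffunE eqxx; lia.
by have := small j jl; rewrite ffunE (negbTE jl).
Qed.

Lemma notin_ef_full_coord x : ~~ in_ef x -> x.2 = false -> 0 < x.1 lst ->
  exists2 i, i != lst & x.1 i = n :> nat.
Proof.
move=> x_L x2 pos.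
case: (pickP [pred i | (i != lst) && (x.1 i == n :> nat)]) => [i /andP[il /eqP] | none].
  by exists i.
case/negP: x_L; apply/in_efP; split=> // i il.
by have := none i; rewrite /= il /=; have := ltn_ord (x.1 i); lia.
Qed.

Definition rkL (a : LT) : nat := rk (val a).

Lemma leq_rkL (a b : LT) : le a b -> rkL a <= rkL b.
Proof. exact: leq_rk. Qed.

Lemma leL_rkL_eq (a b : LT) : le a b -> rkL b <= rkL a -> a = b.
Proof. by move=> ab /(leK_rk_eq ab) /val_inj. Qed.

Lemma leL_rank_step (a b : LT) : le a b -> a != b ->
  exists z : LT, [/\ le a z, le z b &
    rkL z = (rkL a).+1 \/ (rkL z).+1 = rkL b].
Proof.
case: a b => [[fa ba] a_L] [[fb bb] b_L] ab; rewrite -val_eqE /= => neq_ab.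
case/leKP: (ab) => /= fab bab.
have [ba_bb | [ba_F bb_T]] : ba = bb \/ ba = false /\ bb = true.
  by move: bab; case: (ba); case: (bb); auto.
- case: (pickP [pred i | (i != lst) && (fa i < fb i)]) => [i /andP[il lt_i] | none].
    set v : 'I_n.+1 := inord (fa i).+1.
    have vE : v = (fa i).+1 :> nat.
      by rewrite inordK // ltnS (leq_trans lt_i) // -ltnS.
    have av : fa i <= v by rewrite vE.
    exists (mkL (notin_ef_raise a_L il av)); rewrite /leL /=; split.
    + exact: leK_updr (leK_refl _) av.
    + by apply: leK_updl ab _; rewrite vE.
    + by left; have := rk_upd fa i v ba; rewrite /rkL vE /=; lia.
  have eq_other j : j != lst -> fa j = fb j :> nat.
    by move=> jl; have := none j; rewrite /= jl /=; have := fab j; lia.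
  have lt_lst : fa lst < fb lst.
    rewrite ltn_neqAle fab andbT; apply: contra neq_ab => /eqP eq_lst.
    rewrite ba_bb; apply/eqP; congr (_, _); apply/ffunP => j; apply: val_inj.
    by have [-> | /eq_other] := eqVneq j lst.
  set v : 'I_n.+1 := inord (fb lst).-1.
  have vE : v = (fb lst).-1 :> nat.
    by rewrite inordK //; have := ltn_ord (fb lst); lia.
  have vb : v <= fb lst by rewrite vE leq_pred.
  exists (mkL (notin_ef_lower_lst b_L vb)); rewrite /leL /=; split.
  + by apply: leK_updr ab _; rewrite vE; lia.
  + exact: leK_updl (leK_refl _) vb.
  + by right; have := rk_upd fb lst v bb; rewrite /rkL vE /=; lia.
- exists (mkT fa); rewrite /leL /=; split.
  + by apply/leKP; split => //=; rewrite implybT.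
  + by apply/leKP; split => //=; rewrite bb_T.
  + by left; rewrite /rkL /rk /= ba_F addn0 addn1.
Qed.

Lemma coversE (a b : LT) : covers le a b = le a b && (rkL b == (rkL a).+1).
Proof.
apply/and3P/andP => [[ab neq_ab /forallP no_mid] | [ab /eqP rk_b]].
  have [z [az zb rk_z]] := leL_rank_step ab neq_ab.
  have := no_mid z; rewrite az zb /= negb_and !negbK => /orP[] /eqP z_eq;
    split=> //; move: rk_z; rewrite z_eq.
  - by case=> [|->] //; lia.
  - by case=> [->|] //; lia.
split=> //; first by apply: contra_eqN rk_b => /eqP->; lia.
apply/forallP => z; apply/negP => /and4P[az zb za zb'].
have [rk_az rk_zb] := (leq_rkL az, leq_rkL zb).
have [lt_az | ge_az] := ltnP (rkL a) (rkL z).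
  by move: zb'; rewrite (leL_rkL_eq zb) ?eqxx //; lia.
by move: za; rewrite (leL_rkL_eq az ge_az) eqxx.
Qed.

Lemma leL_upper_semimodular : upper_semimodular le.
Proof.
move=> x y m j m_glb j_lub; rewrite !coversE => /andP[mx /eqP rk_x].
have -> : j = joinL x y := is_lub_unique leL_partial_order j_lub (joinL_lub x y).
case/and3P: m_glb => _ my /forallP m_greatest.
have M_x := leK_meetKl (val x) (val y).
have m_meet : val m = meetK (val x) (val y).
  apply: leK_rk_eq (meetK_greatest mx my) _; rewrite leqNgt; apply/negP => lt_mM.
  have M_eq_x : meetK (val x) (val y) = val x.
    by apply: leK_rk_eq M_x _; move: lt_mM; rewrite /rkL in rk_x; rewrite rk_x.
  have xy : le x y by rewrite /leL -M_eq_x; exact: leK_meetKr.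
  have xm := implyP (implyP (m_greatest x) (leK_refl _)) xy.
  by have := leq_rkL xm; lia.
apply/andP; split; first exact: leK_joinKr.
have rk_mod : rkL (joinL x y) + rkL m = rkL x + rkL y.
  by rewrite /rkL m_meet; exact: rk_joinK_meetK.
by apply/eqP; lia.
Qed.

Definition ef_coord (i : 'I_k.+1) : pred 'I_n.+1 :=
  if i == lst then predC1 ord0 else predC1 ord_max.

Lemma in_ef_family x : in_ef x = (x.1 \in family ef_coord) && ~~ x.2.
Proof.
apply/in_efP/andP => [[x2 pos small] | [/familyP box /negbTE x2]].
  split; last by rewrite x2.
  apply/familyP => i; rewrite /ef_coord.
  by case: ifPn => [/eqP-> | /small lt_n]; rewrite !inE -val_eqE /=; lia.
split=> // [|i il].
  by have := box lst; rewrite /ef_coord eqxx !inE -val_eqE /= lt0n.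
have := box i; rewrite /ef_coord (negbTE il) !inE -val_eqE /=.
by rewrite ltn_neqAle -ltnS ltn_ord andbT.
Qed.

Lemma card_ef : #|[pred x : KT | in_ef x]| = n ^ k.+1.
Proof.
rewrite (@eq_card _ _ [set (f, false) | f in family ef_coord]); last first.
  move=> [f b]; rewrite !inE in_ef_family /=.
  by apply/andP/imsetP => [[f_box /negbTE->] | [g g_box [-> ->]]]; first exists f.
rewrite card_imset; last by move=> f g [].
rewrite card_family foldrE big_map big_enum /= (eq_bigr (fun=> n)).
  by rewrite prod_nat_const cardT size_enum_ord.
by move=> i _; rewrite /ef_coord; case: ifP => _; rewrite cardC1 card_ord.
Qed.

Lemma card_L : #|{: LT}| = 2 * n.+1 ^ k.+1 - n ^ k.+1.
Proof.
rewrite card_sig; have := cardC [pred x : KT | in_ef x].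
rewrite card_ef card_prod card_ffun !card_ord card_bool.
by rewrite (@eq_card _ _ [predC [pred x : KT | in_ef x]]) => [|x]; [lia | rewrite !inE].
Qed.

Lemma join_witnesses (S : {set LT}) : S != set0 ->
  exists g : 'I_k.+1 -> LT, [/\ forall j, g j \in S,
     forall i, exists j, forall s, s \in S -> (val s).1 i <= (val (g j)).1 i &
     (exists2 s, s \in S & (val s).2) -> exists j, (val (g j)).2].
Proof.
case/set0Pn => s0 s0S.
pose m i := [arg max_(s > s0 in S) nat_of_ord ((val s).1 i)].
have mS i : m i \in S by rewrite /m; case: arg_maxnP.
have m_max i s : s \in S -> (val s).1 i <= (val (m i)).1 i.
  by rewrite /m; case: arg_maxnP => // w _ w_max /w_max.
have m_coord i : exists j, forall s, s \in S -> (val s).1 i <= (val (m j)).1 i.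
  by exists i; exact: m_max.
have [/exists_inP[t tS t2] | no_top] := boolP [exists s in S, (val s).2]; last first.
  exists m; split => // -[s sS s2].
  by case/exists_inP: no_top; exists s.
have [m2 | /negbTE m2] := boolP (val (m lst)).2; first by exists m; split => //; exists lst.
(* Either t may replace m lst, or m lst also maximises a coordinate i0 != lst. *)
pose g j := if j == lst then t else m j.
have gS j : g j \in S by rewrite /g; case: ifP.
have g_other i : i != lst -> g i = m i by rewrite /g => /negbTE->.
have [t_max | t_small] := leqP ((val (m lst)).1 lst) ((val t).1 lst).
  exists g; split => //; last by exists lst; rewrite /g eqxx.
  move=> i; exists i; have [-> | /g_other->] := eqVneq i lst; last exact: m_max.
  by rewrite /g eqxx => s sS; exact: leq_trans (m_max lst s sS) t_max.
have [i0 i0l m_i0] := notin_ef_full_coord (valP (m lst)) m2 (leq_ltn_trans (leq0n _) t_small).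
exists (fun j => if j == i0 then m lst else g j); split.
- by move=> j; case: ifP.
- move=> i; have [-> | il] := eqVneq i lst.
    by exists i0; rewrite eqxx => s sS; exact: m_max.
  exists i; have [-> | ii0] := eqVneq i i0.
    by rewrite m_i0 => s sS; rewrite -ltnS ltn_ord.
  by rewrite g_other // => s sS; exact: m_max.
- by exists lst; rewrite eq_sym (negbTE i0l) /g eqxx.
Qed.

Lemma leL_breadth_prop : breadth_prop le k.+1.
Proof.
move=> S card_S.
have [|g [gS g_coord g_top]] := join_witnesses (S := S).
  by rewrite -card_gt0 (leq_trans _ card_S).
have gS_sub : g @: setT \subset S by apply/subsetP => _ /imsetP[j _ ->].
have card_g : #|g @: setT| <= k.+1.
  by rewrite (leq_trans (leq_imset_card _ _)) ?cardsT ?card_ord.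
have [S' gS' [S'S card_S']] := subset_card_between gS_sub card_g card_S.
exists S' => //; split => //; apply: eq_is_lub_set => // z /forallP z_ub.
have gz j : le (g j) z by apply: (implyP (z_ub _)); apply: (subsetP gS'); exact: imset_f.
apply/forallP => s; apply/implyP => sS; apply/leKP; split.
  move=> i; have [j s_le_gj] := g_coord i; apply: leq_trans (s_le_gj s sS) _.
  by case/leKP: (gz j) => /(_ i).
apply/implyP => s2; have [|j gj2] := g_top; first by exists s.
by case/leKP: (gz j) => _ /implyP; apply.
Qed.

Definition zeroF : FF := [ffun => ord0].

Lemma notin_ef_zero : ~~ in_ef (zeroF, false).
Proof. by apply/in_efP => -[_]; rewrite ffunE. Qed.

Definition botL : LT := mkL notin_ef_zero.

Lemma botL_le (x : LT) : le botL x.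
Proof. by apply/leKP; split => //= i; rewrite ffunE. Qed.

Lemma leL_lub_set_exists (S : {set LT}) : exists j, is_lub_set le S j.
Proof.
apply: (is_lub_set_exists leL_partial_order botL_le) => x y.
by exists (joinL x y); exact: joinL_lub.
Qed.

(* For i = lst the element e of K is not in L: the atom is then (0, ..., 0; 1). *)
Definition atomK i : KT :=
  if i == lst then (zeroF, true) else ([ffun j => if j == i then inord 1 else ord0], false).

Lemma notin_ef_atom i : ~~ in_ef (atomK i).
Proof.
rewrite /atomK; case: ifPn => il; first exact: notin_ef_top.
by apply/in_efP => -[_]; rewrite ffunE eq_sym (negbTE il).
Qed.

Definition atom i : LT := mkL (notin_ef_atom i).

Lemma atom_inj : injective atom.
Proof.
move=> i j /(congr1 val); rewrite /= /atomK.
have [-> | il] := eqVneq i lst; have [-> | jl] := eqVneq j lst => //= -[/ffunP/(_ i)].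
rewrite !ffunE eqxx; case: eqP => // _ /(congr1 val); rewrite /= inordK //; lia.
Qed.

Definition avoidK u : KT :=
  if u == lst then ([ffun => ord_max], false)
  else ([ffun j => if j == u then ord0 else ord_max], true).

Hypothesis k_gt0 : 0 < k.

Lemma notin_ef_avoid u : ~~ in_ef (avoidK u).
Proof.
rewrite /avoidK; case: ifPn => ul; last exact: notin_ef_top.
apply/in_efP => -[_ _ /(_ ord0)]; rewrite ffunE ltnn -val_eqE /= eq_sym -lt0n.
by move/(_ k_gt0).
Qed.

Definition avoid u : LT := mkL (notin_ef_avoid u).

Lemma atom_le_avoid i u : i != u -> le (atom i) (avoid u).
Proof.
move=> iu; apply/leKP; rewrite /= /atomK /avoidK.
have [il | il] := eqVneq i lst; have [ul | ul] := eqVneq u lst.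
- by move: iu; rewrite il ul eqxx.
- by split => // j; rewrite !ffunE.
- by split => // j; rewrite !ffunE; case: ifP => // _; rewrite inordK //; lia.
- split => // j; rewrite !ffunE; have [-> | _] := eqVneq j i; last by case: ifP.
  by rewrite (negbTE iu) inordK //; lia.
Qed.

Lemma atom_nle_avoid u : ~~ le (atom u) (avoid u).
Proof.
apply/negP => /leKP[+ u2]; rewrite /= /atomK /avoidK in u2 *.
case: ifP u2 => // _ _ /(_ u) /=; rewrite !ffunE !eqxx inordK //; lia.
Qed.

(* Of b + 1 atoms, the one left out of S' is not below [avoid u], which bounds
   all the others. *)
Lemma leL_not_breadth_prop b : 0 < b < k.+1 -> ~ breadth_prop le b.
Proof.
case/andP => b_gt0 b_lt breadth_b.
have [A _ [_ card_A]] :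
    exists2 A : {set 'I_k.+1}, set0 \subset A & A \subset [set: 'I_k.+1] /\ #|A| = b.+1.
  by apply: subset_card_between; rewrite ?sub0set ?cards0 // cardsT card_ord.
have [|S' S'_sub [card_S' lub_S']] := breadth_b (atom @: A).
  by rewrite (card_imset _ atom_inj) card_A.
have /subsetPn[_ /imsetP[u uA ->] uS'] : ~~ (atom @: A \subset S').
  by apply/negP => /subset_leq_card; rewrite card_S' (card_imset _ atom_inj) card_A ltnn.
have [j j_lub] := leL_lub_set_exists S'.
have /andP[/forallP j_ub _] : is_lub_set le (atom @: A) j by rewrite lub_S'.
have /andP[_ /forallP j_least] := j_lub.
have u_j : le (atom u) j := implyP (j_ub _) (imset_f _ uA).
have j_avoid : le j (avoid u).
  apply: (implyP (j_least _)); apply/forallP => w; apply/implyP => wS'.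
  have /imsetP[i _ w_eq] := subsetP S'_sub w wS'.
  by rewrite w_eq atom_le_avoid //; apply: contraNneq uS' => <-; rewrite -w_eq.
by case/negP: (atom_nle_avoid u); exact: leK_trans u_j j_avoid.
Qed.

Lemma leL_has_breadth : has_breadth le k.+1.
Proof. by split => //; [exact: leL_breadth_prop | exact: leL_not_breadth_prop]. Qed.

Definition distn (a b : nat) := (a - b) + (b - a).

Definition l1dist x y : nat := \sum_i distn (x.1 i) (y.1 i) + (x.2 != y.2).

Lemma l1dist_refl x : l1dist x x = 0.
Proof. by rewrite /l1dist eqxx addn0 big1 // => i _; rewrite /distn subnn. Qed.

Lemma l1dist_sym x y : l1dist x y = l1dist y x.
Proof.
rewrite /l1dist eq_sym; congr (_ + _); apply: eq_bigr => i _; rewrite /distn; lia.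
Qed.

Lemma l1dist_triangle x y z : l1dist x z <= l1dist x y + l1dist y z.
Proof.
rewrite /l1dist addnACA -big_split leq_add //=.
  by apply: leq_sum => i _; rewrite /distn; lia.
by case: x.2; case: y.2; case: z.2.
Qed.

Lemma l1dist_leK x y : leK x y -> l1dist x y + rk x = rk y.
Proof.
case/leKP => xy1 xy2; rewrite /l1dist /rk addnACA -big_split /=.
congr (_ + _); first by apply: eq_bigr => i _; have := xy1 i; rewrite /distn; lia.
by move: xy2; case: x.2; case: y.2.
Qed.

Lemma l1dist_adj (a b : LT) : adj le a b -> l1dist (val a) (val b) <= 1.
Proof.
have l1_cover (x y : LT) : covers le x y -> l1dist (val x) (val y) <= 1.
  rewrite coversE => /andP[xy /eqP rk_y].
  by have := l1dist_leK xy; move: rk_y; rewrite /rkL; lia.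
by case/orP => [/l1_cover // | /l1_cover]; rewrite l1dist_sym.
Qed.

Lemma l1dist_ub x y : l1dist x y <= k.+1 * n + 1.
Proof.
rewrite /l1dist leq_add //; last by case: (_ != _).
apply: leq_trans (_ : \sum_(i < k.+1) n <= _); last by rewrite sum_nat_const card_ord.
apply: leq_sum => i _.
by have := ltn_ord (x.1 i); have := ltn_ord (y.1 i); rewrite /distn; lia.
Qed.

Lemma leq_card_L : n.+1 ^ k.+1 <= #|{: LT}|.
Proof.
have : n ^ k.+1 <= n.+1 ^ k.+1 by rewrite leq_exp2r.
by rewrite card_L; lia.
Qed.

Lemma l1dist_le_dist (z x : LT) : l1dist (val z) (val x) <= dist le z x.
Proof.
apply: leq_dist => [m |].
  apply: (leq_walk_len (D := fun a b : LT => l1dist (val a) (val b))) => [a | a b c |].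
  - exact: l1dist_refl.
  - exact: l1dist_triangle.
  - exact: l1dist_adj.
exact: leq_trans (l1dist_ub _ _) (leq_trans (bernoulli _ _) leq_card_L).
Qed.

Lemma adj_top_succ f i a : a < n ->
  adj le (mkT (upd f i (inord a))) (mkT (upd f i (inord a.+1))).
Proof.
move=> lt_an; apply/orP; left; rewrite coversE; apply/andP; split.
  apply/leKP; split => [j|] //=; rewrite !ffunE.
  by case: ifP => // _; rewrite !inordK //; lia.
have := rk_upd f i (inord a) true; have := rk_upd f i (inord a.+1) true.
by rewrite /rkL !inordK //=; lia.
Qed.

Lemma walk_top_up f i : walk_len le n (mkT (upd f i ord0)) (mkT (upd f i ord_max)).
Proof.
rewrite -[ord0](inord_val (n' := n)) -[ord_max](inord_val (n' := n)).
by apply: (@walk_len_chain _ _ (fun a => mkT (upd f i (inord a)))) => a; exact: adj_top_succ.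
Qed.

Lemma walk_top_down f i : walk_len le n (mkT (upd f i ord_max)) (mkT (upd f i ord0)).
Proof.
have := @walk_len_chain _ _ (fun a => mkT (upd f i (inord (n - a)))) n.
rewrite /= subn0 subnn -[ord0](inord_val (n' := n)) -[ord_max](inord_val (n' := n)).
apply=> a lt_an; rewrite /adj orbC -(subnSK lt_an).
by apply: adj_top_succ; lia.
Qed.

Lemma adj_top_bot f (f_L : ~~ in_ef (f, false)) : adj le (mkT f) (mkL f_L).
Proof.
apply/orP; right; rewrite coversE; apply/andP; split; first by apply/leKP.
by rewrite /rkL /rk /= addn0 addn1.
Qed.

Hypotheses (n_ge3 : 3 <= n) (k_ge2 : 1 < k).

Definition i0 : 'I_k.+1 := inord 0.
Definition i1 : 'I_k.+1 := inord 1.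

Lemma i0_neq_lst : i0 != lst. Proof. by rewrite -val_eqE /= inordK //; lia. Qed.
Lemma i1_neq_lst : i1 != lst. Proof. by rewrite -val_eqE /= inordK //; lia. Qed.
Lemma i0_neq_i1 : i0 != i1. Proof. by rewrite -val_eqE /= !inordK //; lia. Qed.

Definition lstF : FF := [ffun j => if j == lst then ord_max else ord0].
Definition spikeF i : FF := [ffun j => if (j == i) || (j == lst) then ord_max else ord0].

Lemma notin_ef_spike i : i != lst -> ~~ in_ef (spikeF i, false).
Proof.
by move=> il; apply/in_efP => -[_ _ /(_ i il)]; rewrite ffunE eqxx ltnn.
Qed.

Definition spike i (il : i != lst) : LT := mkL (notin_ef_spike il).

Lemma walk_lstF_spike i (il : i != lst) : walk_len le n.+1 (mkT lstF) (spike il).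
Proof.
rewrite -[X in walk_len _ X]addn1.
apply: walk_len_cat (walk_len_adj (adj_top_bot (notin_ef_spike il))).
have := walk_top_up lstF i.
have -> : upd lstF i ord_max = spikeF i by apply/ffunP => j; rewrite !ffunE; case: eqP.
have -> // : upd lstF i ord0 = lstF.
apply/ffunP => j; rewrite !ffunE; have [-> | _] := eqVneq j i; last by [].
by rewrite (negbTE il).
Qed.

Lemma walk_lstF_bot : walk_len le n.+1 (mkT lstF) botL.
Proof.
rewrite -[X in walk_len _ X]addn1.
apply: walk_len_cat (walk_len_adj (adj_top_bot notin_ef_zero)).
have := walk_top_down zeroF lst.
have -> : upd zeroF lst ord_max = lstF by apply/ffunP => j; rewrite !ffunE.
by have -> : upd zeroF lst ord0 = zeroF by apply/ffunP => j; rewrite !ffunE; case: ifP.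
Qed.

(* Summing over the three profile points, coordinates i0, i1 and lst cost at
   least n each and the C_2 coordinate 3; when the latter is 0, membership in L
   forces one more coordinate to pay the missing 3. *)
Lemma l1dist_profile_lb (z : LT) :
  3 * n.+1 <= l1dist (val z) (val (spike i0_neq_lst))
              + l1dist (val z) (val (spike i1_neq_lst)) + l1dist (val z) (val botL).
Proof.
case: z => [[f b] z_L] /=.
pose c i := distn (f i) (spikeF i0 i) + distn (f i) (spikeF i1 i) + distn (f i) (zeroF i).
have -> : l1dist (f, b) (spikeF i0, false) + l1dist (f, b) (spikeF i1, false)
          + l1dist (f, b) (zeroF, false) = \sum_i c i + 3 * b.
  by rewrite /l1dist /c /= !big_split /=; case: (b); lia.
have f_ub i : f i <= n := leq_ord (f i).
have [i0l i1l i01] := And3 i0_neq_lst i1_neq_lst i0_neq_i1.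
have i10 : i1 != i0 by rewrite eq_sym.
have c_i0 : c i0 = n + f i0.
  by rewrite /c !ffunE eqxx (negbTE i01) (negbTE i0l) /distn /=; have := f_ub i0; lia.
have c_i1 : c i1 = n + f i1.
  by rewrite /c !ffunE eqxx (negbTE i10) (negbTE i1l) /distn /=; have := f_ub i1; lia.
have c_lst : c lst = 2 * n - f lst.
  by rewrite /c !ffunE eqxx !orbT /distn /=; have := f_ub lst; lia.
have sum_c (s : seq 'I_k.+1) : uniq s -> \sum_(i <- s) c i <= \sum_i c i.
  exact: leq_sum_uniq.
have := sum_c [:: i0; i1; lst]; rewrite !big_cons big_nil /= !inE !negb_or i01 i0l i1l.
rewrite c_i0 c_i1 c_lst => /(_ isT); have := f_ub lst.
case: b z_L => [_ | z_L] /=; first by lia.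
move=> f_lst sum3.
have [f0 | f_pos] := posnP (f lst); first by lia.
have [d dl /= f_d] := notin_ef_full_coord z_L erefl f_pos.
have [d_i0 | d0] := eqVneq d i0; first by move: f_d; rewrite d_i0; lia.
have [d_i1 | d1] := eqVneq d i1; first by move: f_d; rewrite d_i1; lia.
have c_d : c d = 3 * n.
  by rewrite /c !ffunE (negbTE d0) (negbTE d1) (negbTE dl) /distn /= f_d; lia.
have := sum_c [:: i0; i1; lst; d]; rewrite !big_cons big_nil /= !inE !negb_or.
by rewrite i01 i0l i1l ![_ == d]eq_sym d0 d1 dl c_i0 c_i1 c_lst c_d => /(_ isT); lia.
Qed.

Lemma median_lstF :
  is_median le [:: spike i0_neq_lst; spike i1_neq_lst; botL] (mkT lstF).
Proof.
move=> z; rewrite !total_dist3.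
have card_gt : n.+1 < #|{: LT}|.
  by have := bernoulli k.+1 n; have := leq_card_L; nia.
have := dist_leq (walk_lstF_spike i0_neq_lst) card_gt.
have := dist_leq (walk_lstF_spike i1_neq_lst) card_gt.
have := dist_leq walk_lstF_bot card_gt.
have := l1dist_le_dist z (spike i0_neq_lst).
have := l1dist_le_dist z (spike i1_neq_lst).
have := l1dist_le_dist z botL.
have := l1dist_profile_lb z.
lia.
Qed.

Lemma leL_not_c1_median : ~ c1_median le.
Proof.
move=> c1.
set xi := [:: spike i0_neq_lst; spike i1_neq_lst; botL].
have [j j_lub] := leL_lub_set_exists [set x in xi].
have Y_j := c1 xi _ isT median_lstF j j_lub.
have j_avoid : le j (avoid lst).
  case/andP: j_lub => _ /forallP j_least; apply: (implyP (j_least _)).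
  apply/forallP => w; apply/implyP; rewrite inE !in_cons in_nil orbF.
  case/or3P => /eqP->; apply/leKP; rewrite /= /avoidK eqxx;
    by split => // i; rewrite /= !ffunE /= ?leq_ord.
by case/leKP: (leK_trans Y_j j_avoid) => _; rewrite /= /avoidK eqxx.
Qed.

End Lnk.

Theorem lemma2p3 (n k : nat) : 4 <= n -> 3 <= k ->
  [/\ is_lattice (@leL n k),
      upper_semimodular (@leL n k),
      #|{: L n k}| = 2 * n ^ k - (n - 1) ^ k,
      has_breadth (@leL n k) k &
      ~ c1_median (@leL n k)].
Proof.
case: n => [|n] // n_ge4; case: k => [|k] // k_ge3.
have [n_gt0 n_ge3 k_gt0 k_ge2] : [/\ 0 < n, 2 < n, 0 < k & 1 < k] by split; lia.
split.
- exact: leL_lattice.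
- exact: leL_upper_semimodular.
- by rewrite card_L // subn1.
- exact: leL_has_breadth.
- exact: leL_not_c1_median.
Qed.
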